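(* Let $p>3$ be a prime, let $m\le 2p$, and let $A_1,\ldots,A_m\subseteq[4p]$ with $|A_i|=2p$ for each $i$. Then there exists $C\subseteq[4p]$ with $|C|=3p$ such that $|C\cap A_i|\not\equiv0\pmod p$ for every $1\le i\le m$.
   Context: $[4p]=\{1,\dots,4p\}$. *)

From mathcomp Require Import all_boot.
Set Implicit Arguments. Unset Strict Implicit. Unset Printing Implicit Defensive.

From mathcomp Require Import all_boot.
From mathcomp Require Import zify.

Set Implicit Arguments.
Unset Strict Implicit.
Unset Printing Implicit Defensive.

(* Take C to be the complement of a p-set D that meets every A_i and every
   [4p] \ A_i.  Then 0 < |D ∩ A_i| < p, so |C ∩ A_i| = 2p - |D ∩ A_i| is not
   divisible by p.  Such a D exists by counting: at most 2m C(2p, p) <= 4p C(2p, p)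
   p-sets lie inside some A_i or its complement, whereas there are
   C(4p, p) >= 2^p C(2p, p) p-sets in all, and 4p < 2^p for p >= 5 (primality
   of p is only needed to rule out p = 4). *)

Lemma leq_card_bigcup (T I : finType) (F : I -> {set T}) :
  #|\bigcup_i F i| <= \sum_i #|F i|.
Proof.
elim/big_rec2: _ => [|i n s _ le_n_s]; first by rewrite cards0.
exact: leq_trans (leq_card_setU _ _) (leq_add _ le_n_s).
Qed.

Lemma leq_expn_ffactM c n k : 0 < c -> c ^ k * n ^_ k <= (c * n) ^_ k.
Proof.
move=> c_gt0; elim: k => [|k IHk]; first by rewrite !ffactn0.
rewrite !ffactnSr expnS.
have -> : c * c ^ k * (n ^_ k * (n - k)) = c ^ k * n ^_ k * (c * (n - k)) by nia.
by apply: leq_mul IHk _; nia.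
Qed.

Lemma leq_expn_binM c n k : 0 < c -> c ^ k * 'C(n, k) <= 'C(c * n, k).
Proof.
move=> c_gt0; rewrite -(leq_pmul2r (fact_gt0 k)) -mulnA !bin_ffact.
exact: leq_expn_ffactM.
Qed.

Lemma ltn_mul4_exp2 n : 4 < n -> 4 * n < 2 ^ n.
Proof.
elim: n => // n IHn; rewrite ltnS leq_eqVlt expnS => /orP[/eqP <- // | lt4n].
by have := IHn lt4n; lia.
Qed.

Lemma exists_set_avoiding_subsets (T I : finType) (F : I -> {set T}) n k :
  (forall i, #|F i| <= n) -> #|I| * 'C(n, k) < 'C(#|T|, k) ->
  exists D : {set T}, #|D| = k /\ forall i, ~~ (D \subset F i).
Proof.
move=> le_F_n lt_bad_all.
pose bad := \bigcup_(i : I) [set D : {set T} | D \subset F i & #|D| == k].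
have lt_bad : #|bad| < #|[set D : {set T} | #|D| == k]|.
  rewrite card_draws /bad; apply: leq_ltn_trans lt_bad_all.
  apply: leq_trans (leq_card_bigcup _) _; rewrite -sum_nat_const.
  apply: leq_sum => i _.
  by rewrite cards_draws leq_bin2l.
have [D] : exists2 D, D \in [set D : {set T} | #|D| == k] & D \notin bad.
  apply/subsetPn; apply: contraTN lt_bad => /subset_leq_card.
  by rewrite leqNgt.
rewrite inE => /eqP card_D D_good; exists D; split=> // i.
apply: contra D_good => sDF; apply/bigcupP; exists i => //.
by rewrite inE sDF card_D eqxx.
Qed.

Lemma card_setI_straddle (T : finType) (D B : {set T}) :
  ~~ (D \subset B) -> ~~ (D \subset ~: B) -> 0 < #|D :&: B| < #|D|.
Proof.
move=> nsDB nsDBc; apply/andP; split.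
  rewrite card_gt0; apply: contra nsDBc => /eqP DB0.
  by rewrite -disjoints_subset -setI_eq0 DB0.
rewrite ltn_neqAle subset_leq_card ?subsetIl // andbT.
apply: contra nsDB => /eqP card_DB; apply/setIidPl/eqP.
by rewrite eqEcard subsetIl card_DB leqnn.
Qed.

Lemma card_setCI_mod (T : finType) (D B : {set T}) p :
  #|D| = p -> #|B| = 2 * p -> 0 < #|D :&: B| < p ->
  #|~: D :&: B| %% p != 0.
Proof.
move=> card_D card_B /andP[DB_gt0 DB_lt].
have card_DcB : #|~: D :&: B| = p + (p - #|D :&: B|).
  by rewrite setIC -setDE cardsD card_B setIC; lia.
by rewrite card_DcB modnDl modn_small; lia.
Qed.

Theorem mainTheorem12 (p m : nat) (A : 'I_m -> {set 'I_(4 * p)}) :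
  prime p -> 3 < p -> m <= 2 * p ->
  (forall i, #|A i| = 2 * p) ->
  exists C : {set 'I_(4 * p)},
    #|C| = 3 * p /\ (forall i, #|C :&: A i| %% p != 0).
Proof.
move=> p_pr p_gt3 le_m card_A.
have p_gt4 : 4 < p by case: (p =P 4) p_pr => [-> //|]; lia.
have card_Ac i : #|~: A i| = 2 * p by rewrite cardsCs setCK card_ord card_A; lia.
pose F (ib : 'I_m * bool) := if ib.2 then A ib.1 else ~: A ib.1.
have card_F ib : #|F ib| <= 2 * p.
  by case: ib => i [] /=; rewrite ?card_A ?card_Ac.
have few_bad : #|{: 'I_m * bool}| * 'C(2 * p, p) < 'C(#|'I_(4 * p)|, p).
  rewrite card_prod card_bool !card_ord.
  have := @leq_expn_binM 2 (2 * p) p isT; rewrite mulnA (_ : 2 * 2 = 4) //.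
  have := ltn_mul4_exp2 p_gt4; have : 0 < 'C(2 * p, p) by rewrite bin_gt0; lia.
  nia.
have [D [card_D D_avoid]] := exists_set_avoiding_subsets card_F few_bad.
exists (~: D); split; first by rewrite cardsCs setCK card_ord card_D; lia.
move=> i; apply: card_setCI_mod => //.
by have := card_setI_straddle (D_avoid (i, true)) (D_avoid (i, false)); rewrite card_D.
Qed.
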